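(* Let the real variables be $c_{11},c_{22},c_{33},c_{12},c_{23},c_{31},s_{12},s_{23},s_{31}$ (collectively $(c,s)$). Define $p_3=c_{12}(c_{23}c_{31}-s_{23}s_{31})-s_{12}(s_{23}c_{31}+c_{23}s_{31})-c_{11}c_{22}c_{33}$, $p_{ij}=c_{ij}^2+s_{ij}^2-c_{ii}c_{jj}$ for $(i,j)\in\{(1,2),(2,3),(3,1)\}$, $q_3^1=s_{12}c_{33}+c_{23}s_{31}+s_{23}c_{31}$, $q_3^2=c_{12}c_{33}-c_{23}c_{31}+s_{23}s_{31}$. Then $\{(c,s):p_3=p_{12}=p_{23}=p_{31}=0\}=\{(c,s):q_3^1=q_3^2=p_{12}=p_{23}=p_{31}=0\}$. *)

From Stdlib Require Export Reals.
Open Scope R_scope.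

Definition p3 (c11 c22 c33 c12 c23 c31 s12 s23 s31 : R) : R :=
  c12 * (c23 * c31 - s23 * s31) - s12 * (s23 * c31 + c23 * s31) - c11 * c22 * c33.

Definition pij (cij sij cii cjj : R) : R := cij ^ 2 + sij ^ 2 - cii * cjj.

Definition q3_1 (c11 c22 c33 c12 c23 c31 s12 s23 s31 : R) : R :=
  s12 * c33 + c23 * s31 + s23 * c31.

Definition q3_2 (c11 c22 c33 c12 c23 c31 s12 s23 s31 : R) : R :=
  c12 * c33 - c23 * c31 + s23 * s31.

(* Both directions rest on two polynomial identities.  First, q3_1^2 + q3_2^2
   lies in the ideal generated by p3 and the three pij, so on the first zero set
   it vanishes, and over the reals a vanishing sum of two squares forces
   q3_1 = q3_2 = 0.  Second, p3 lies in the ideal generated by q3_1, q3_2 and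
   p12, which gives the converse inclusion. *)
From Stdlib Require Import Reals.
Open Scope R_scope.

Section Identities.

Variables c11 c22 c33 c12 c23 c31 s12 s23 s31 : R.

Let P3 := p3 c11 c22 c33 c12 c23 c31 s12 s23 s31.
Let P12 := pij c12 s12 c11 c22.
Let P23 := pij c23 s23 c22 c33.
Let P31 := pij c31 s31 c33 c11.
Let Q1 := q3_1 c11 c22 c33 c12 c23 c31 s12 s23 s31.
Let Q2 := q3_2 c11 c22 c33 c12 c23 c31 s12 s23 s31.

Lemma q3_sqr_sum :
  Q1² + Q2² =
  P23 * P31 + c22 * c33 * P31 + c33 * c11 * P23 + c33 ^ 2 * P12 - 2 * c33 * P3.
Proof. unfold Q1, Q2, P3, P12, P23, P31, q3_1, q3_2, p3, pij, Rsqr; ring. Qed.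

Lemma p3_decomp : P3 = c33 * P12 - c12 * Q2 - s12 * Q1.
Proof. unfold Q1, Q2, P3, P12, q3_1, q3_2, p3, pij; ring. Qed.

End Identities.

Theorem proposition5 :
  forall c11 c22 c33 c12 c23 c31 s12 s23 s31 : R,
    (p3 c11 c22 c33 c12 c23 c31 s12 s23 s31 = 0 /\
     pij c12 s12 c11 c22 = 0 /\ pij c23 s23 c22 c33 = 0 /\ pij c31 s31 c33 c11 = 0)
    <->
    (q3_1 c11 c22 c33 c12 c23 c31 s12 s23 s31 = 0 /\
     q3_2 c11 c22 c33 c12 c23 c31 s12 s23 s31 = 0 /\
     pij c12 s12 c11 c22 = 0 /\ pij c23 s23 c22 c33 = 0 /\ pij c31 s31 c33 c11 = 0).
Proof.
  intros c11 c22 c33 c12 c23 c31 s12 s23 s31.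
  pose proof (q3_sqr_sum c11 c22 c33 c12 c23 c31 s12 s23 s31) as Hsqr.
  pose proof (p3_decomp c11 c22 c33 c12 c23 c31 s12 s23 s31) as Hp3.
  split.
  - intros (h3 & h12 & h23 & h31).
    rewrite h3, h12, h23, h31 in Hsqr.
    assert (Hq : q3_1 c11 c22 c33 c12 c23 c31 s12 s23 s31 = 0 /\
                 q3_2 c11 c22 c33 c12 c23 c31 s12 s23 s31 = 0).
    { apply Rplus_sqr_eq_0; rewrite Hsqr; ring. }
    tauto.
  - intros (h1 & h2 & h12 & h23 & h31).
    rewrite h1, h2, h12 in Hp3.
    repeat split; auto; rewrite Hp3; ring.
Qed.
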